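(* Fix $h>0$. For a positive integer $N_1$ let $N_t=4N_1$ and $$r_t(x) = \frac{xh}{\pi} \sum_{j=1}^{N_t} \frac{1}{\sqrt{jh}} \cdot \frac{e^{\sqrt{jh}-\sqrt{N_t h/4}}}{e^{2\sqrt{jh}-2\sqrt{N_t h/4}} + x}.$$ Let $p_j = -\exp\!\big(-\sigma(\sqrt{N_1}-\sqrt{j}\,)\big)$, $1\le j\le N_1$, with $\sigma = 2\sqrt{h}$. Then there exist coefficients $a_1,\dots,a_{N_1}$ and a polynomial $b$ of degree $N_2=\mathcal{O}(\sqrt{N_1}\,)$ such that the rational function $r(x)=\sum_{j=1}^{N_1}\frac{a_j}{x-p_j}+b(x)$ satisfies $$|r_t(x)-r(x)| = \mathcal{O}\big(e^{-\sqrt{N_t h/4}}\big)$$ as $N_t\to\infty$, uniformly for $x\in[0,1]$. *)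

From HB Require Import structures.
From mathcomp Require Import all_boot all_order all_algebra.
From mathcomp Require Import all_classical all_reals all_analysis.
Set Implicit Arguments. Unset Strict Implicit. Unset Printing Implicit Defensive.
Import Order.TTheory GRing.Theory Num.Theory.
Local Open Scope ring_scope.

Definition Nt (N1 : nat) : nat := (4 * N1)%N.

Definition r_t (R : realType) (h : R) (N1 : nat) (x : R) : R :=
  x * h / pi *
  \sum_(1 <= j < (Nt N1).+1)
     ((Num.sqrt (j%:R * h))^-1 *
      (expR (Num.sqrt (j%:R * h) - Num.sqrt ((Nt N1)%:R * h / 4%:R)) /
       (expR (2%:R * Num.sqrt (j%:R * h) - 2%:R * Num.sqrt ((Nt N1)%:R * h / 4%:R)) + x))).

Definition pole (R : realType) (h : R) (N1 j : nat) : R :=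
  - expR (- (2%:R * Num.sqrt h) * (Num.sqrt N1%:R - Num.sqrt j%:R)).

Definition r_approx (R : realType) (h : R) (N1 : nat) (a : nat -> R) (b : {poly R})
  (x : R) : R :=
  \sum_(1 <= j < N1.+1) (a j / (x - pole h N1 j)) + b.[x].

(* Each term of r_t is w_j x / (x + u_j^2) with u_j = e^(sqrt(jh) - sqrt(N_1 h)),
   and for j <= N_1 its pole -u_j^2 is exactly p_j: these terms are kept as
   partial fractions (a residue plus the constant w_j).  For j > N_1 we have
   u_j >= 1, so the Taylor polynomial of degree n of x / (x + u_j^2) at 1/2
   has error at most 3^-n / u_j on [0, 1], while w_j <= u_j h / (pi sqrt h).
   The 3 N_1 remaining terms thus contribute O(N_1 3^-n); the choice
   n ~ 4 sqrt(N_1 h) makes this O(N_1 e^(-2 sqrt(N_1 h))) = O(e^(-sqrt(N_1 h))). *)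

From HB Require Import structures.
From mathcomp Require Import all_boot all_order all_algebra.
From mathcomp Require Import all_classical all_reals all_analysis.
From mathcomp Require Import ring lra.
Set Implicit Arguments.
Unset Strict Implicit.
Unset Printing Implicit Defensive.
Import Order.TTheory GRing.Theory Num.Theory.
Local Open Scope ring_scope.

Section FracTaylor.
Variable R : fieldType.
Implicit Types (v c x : R) (n : nat).

(* Taylor polynomial of x / (x + v) at c, read off from
   v / (x + v) = v / (v + c) * \sum_k ((c - x) / (v + c)) ^+ k. *)
Definition frac_taylor v c n : {poly R} :=
  1 - \sum_(k < n) (v / (v + c) ^+ k.+1) *: (c%:P - 'X) ^+ k.

Lemma size_frac_taylor v c n : (size (frac_taylor v c n.+1) <= n.+1)%N.
Proof.
rewrite (leq_trans (size_polyD _ _)) // geq_max size_poly1 size_polyN /=.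
rewrite (leq_trans (size_sum _ _ _)) //; apply/bigmax_leqP => k _.
rewrite (leq_trans (size_scale_leq _ _)) // (leq_trans (leqSpred _)) //.
by rewrite size_exp -opprB size_polyN size_XsubC mul1n.
Qed.

Lemma frac_taylorE v c n x : x + v != 0 -> v + c != 0 ->
  x / (x + v) - (frac_taylor v c n).[x] = - v * ((c - x) / (v + c)) ^+ n / (x + v).
Proof.
move=> xv0 vc0; set q := (c - x) / (v + c).
have cxvc : c - x - (v + c) != 0.
  by rewrite (_ : c - x - (v + c) = - (x + v)) ?oppr_eq0 //; ring.
have q1 : q - 1 != 0.
  have -> : q - 1 = (c - x - (v + c)) / (v + c) by rewrite /q; field.
  by rewrite mulf_neq0 ?invr_eq0.
have geom : \sum_(k < n) v / (v + c) ^+ k.+1 * (c - x) ^+ k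
            = v / (v + c) * ((q ^+ n - 1) / (q - 1)).
  rewrite subrX1 [(q - 1) * _]mulrC mulfK // mulr_sumr; apply: eq_bigr => k _.
  by rewrite /q exprMn exprVn exprSr; field; rewrite expf_neq0.
rewrite /frac_taylor hornerD hornerN hornerC horner_sum.
under eq_bigr do rewrite hornerZ horner_exp hornerD hornerN hornerC hornerX.
rewrite geom /q; move: (_ ^+ n) => Q.
by field; rewrite xv0 vc0 mulN1r cxvc.
Qed.
End FracTaylor.

Lemma frac_taylor_err_le (R : realFieldType) (u x : R) n :
  1 <= u -> 0 <= x -> x <= 1 ->
  `| u * (x / (x + u ^+ 2) - (frac_taylor (u ^+ 2) 2^-1 n.+1).[x]) | <= 3^-1 ^+ n.
Proof.
move=> u1 x0 x1; set v := u ^+ 2.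
have v1 : 1 <= v by rewrite exprn_ege1.
have xv0 : 0 < x + v by lra.
have w0 : 0 < v + 2^-1 by lra.
rewrite frac_taylorE ?gt_eqF //; set q := (2^-1 - x) / (v + 2^-1).
have q_le : `|q| <= 2^-1 / (v + 2^-1).
  rewrite /q normrM normfV (gtr0_norm w0) ler_pM2r ?invr_gt0 //.
  by rewrite ler_norml; apply/andP; split; lra.
clearbody q.
have -> : `|u * (- v * q ^+ n.+1 / (x + v))| = v / (x + v) * (u * `|q|) * `|q| ^+ n.
  rewrite !normrM normrN normfV !normrX (ger0_norm (le_trans ler01 u1)).
  by rewrite (gtr0_norm xv0) [`|q| ^+ n.+1]exprS /v; ring.
have vxv_ge0 : 0 <= v / (x + v) by rewrite divr_ge0 //; lra.
have vxv_le1 : v / (x + v) <= 1 by rewrite ler_pdivrMr // mul1r; lra.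
have uq_ge0 : 0 <= u * `|q| by rewrite mulr_ge0 //; lra.
have uq_le1 : u * `|q| <= 1.
  apply: le_trans (ler_wpM2l _ q_le) _; first lra.
  by rewrite mulrA ler_pdivrMr // mul1r /v; nra.
have q_le3 : `|q| <= 3^-1 by apply: le_trans q_le _; rewrite ler_pdivrMr //; lra.
apply: (@le_trans _ _ (1 * 1 * 3^-1 ^+ n)); last by rewrite !mul1r.
apply: ler_pM; [exact: mulr_ge0 | exact: exprn_ge0 | exact: ler_pM |].
by apply: lerXn2r; rewrite ?nnegrE.
Qed.

Section ExpBounds.
Variable R : realType.

Lemma inv4_le_expRN1 : 4^-1 <= expR (-1) :> R.
Proof.
have -> : expR (-1) = expR (- 2^-1) ^+ 2 :> R by rewrite -expRM_natl; congr expR; field.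
have := expR_ge1Dx (- 2^-1 : R); nra.
Qed.

Lemma inv3_expn_le_expRN (m : nat) : 3^-1 ^+ (2 * m) <= expR (- m%:R) :> R.
Proof.
rewrite exprM -mulrN1 expRM_natl; apply: lerXn2r; rewrite ?nnegrE ?expR_ge0 //.
by apply: le_trans inv4_le_expRN1; rewrite expr2; lra.
Qed.

Lemma sqr_le_4expR (y : R) : 0 <= y -> y ^+ 2 <= 4 * expR y.
Proof.
have -> : expR y = expR (y / 2) ^+ 2 by rewrite -expRM_natl; congr expR; field.
have := expR_ge1Dx (y / 2); nra.
Qed.

End ExpBounds.

Section RationalApproximation.
Variables (R : realType) (h : R) (N1 : nat).
Hypothesis hpos : 0 < h.

Let S := Num.sqrt (N1%:R * h).

Definition node (j : nat) : R := expR (Num.sqrt (j%:R * h) - S).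

Definition weight (j : nat) : R := h / pi / Num.sqrt (j%:R * h) * node j.

Definition residue (j : nat) : R := - (weight j * node j ^+ 2).

Definition poly_part (n : nat) : {poly R} :=
  \sum_(1 <= j < N1.+1) (weight j)%:P
  + \sum_(N1.+1 <= j < (Nt N1).+1) weight j *: frac_taylor (node j ^+ 2) 2^-1 n.+1.

Definition taylor_order : nat := (2 * (Num.truncn (2 * S)).+1)%N.

Lemma sqrt_Nt_div4 : Num.sqrt ((Nt N1)%:R * h / 4%:R) = S.
Proof. by rewrite /Nt natrM; congr Num.sqrt; field. Qed.

Lemma r_tE x :
  r_t h N1 x = \sum_(1 <= j < (Nt N1).+1) weight j * (x / (x + node j ^+ 2)).
Proof.
rewrite /r_t sqrt_Nt_div4 mulr_sumr; apply: eq_bigr => j _.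
rewrite -mulrBr -[2%:R]/2 expRM_natl /weight /node [_ + x]addrC; ring.
Qed.

Lemma poleE j : pole h N1 j = - node j ^+ 2.
Proof.
rewrite /pole /node /S -expRM_natl !sqrtrM ?ler0n //.
by congr (- expR _); ring.
Qed.

Lemma node_ge1 j : (N1 <= j)%N -> 1 <= node j.
Proof.
move=> le_N1j; rewrite -expR0 ler_expR subr_ge0 ler_wsqrtr //.
by rewrite ler_wpM2r ?ler_nat // ltW.
Qed.

Lemma size_poly_part n : (size (poly_part n) <= n.+1)%N.
Proof.
rewrite (leq_trans (size_polyD _ _)) // geq_max.
apply/andP; split; rewrite (leq_trans (size_sum _ _ _)) //.
all: apply/bigmax_leqP_seq => j _ _.
- exact: leq_trans (size_polyC_leq1 _) _.
- exact: leq_trans (size_scale_leq _ _) (size_frac_taylor _ _ _).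
Qed.

Lemma r_t_sub_r_approx n x : 0 <= x ->
  r_t h N1 x - r_approx h N1 residue (poly_part n) x =
  \sum_(N1.+1 <= j < (Nt N1).+1)
     weight j * (x / (x + node j ^+ 2) - (frac_taylor (node j ^+ 2) 2^-1 n.+1).[x]).
Proof.
move=> x0.
have head : \sum_(1 <= j < N1.+1) weight j * (x / (x + node j ^+ 2)) =
    \sum_(1 <= j < N1.+1) residue j / (x - pole h N1 j)
    + \sum_(1 <= j < N1.+1) (weight j)%:P.[x].
  rewrite -big_split; apply: eq_bigr => j _ /=.
  have : x + node j ^+ 2 != 0 by rewrite gt_eqF // ltr_wpDl // exprn_gt0 // expR_gt0.
  by rewrite hornerC poleE opprK /residue => ?; field.
rewrite r_tE /r_approx (big_cat_nat (n := N1.+1)) //=; last by rewrite ltnS /Nt leq_pmull.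
rewrite head hornerD !horner_sum.
under [X in _ = X]eq_bigr do rewrite mulrBr.
under [X in _ - (_ + (_ + X))]eq_bigr do rewrite hornerZ.
by rewrite sumrB; ring.
Qed.

Lemma weight_mul_err_le n j x : (N1 < j)%N -> 0 <= x -> x <= 1 ->
  `|weight j * (x / (x + node j ^+ 2) - (frac_taylor (node j ^+ 2) 2^-1 n.+1).[x])|
    <= h / pi / Num.sqrt h * 3^-1 ^+ n.
Proof.
move=> lt_N1j x0 x1.
have sh0 : 0 < Num.sqrt h by rewrite sqrtr_gt0.
have sh_le : Num.sqrt h <= Num.sqrt (j%:R * h).
  apply/ler_wsqrtr/ler_peMl; first exact: ltW.
  by rewrite ler1n (leq_ltn_trans (leq0n N1)).
have hpi_ge0 : 0 <= h / pi by rewrite divr_ge0 ?ltW ?pi_gt0.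
have weight_ge0 : 0 <= h / pi / Num.sqrt (j%:R * h) by rewrite divr_ge0 ?sqrtr_ge0.
rewrite /weight -mulrA normrM ger0_norm //.
apply: ler_pM => //.
- by rewrite ler_wpM2l // lef_pV2 ?posrE // (lt_le_trans sh0).
- by apply: frac_taylor_err_le; rewrite ?node_ge1 // ltnW.
Qed.

Lemma r_t_sub_r_approx_le n x : 0 <= x -> x <= 1 ->
  `|r_t h N1 x - r_approx h N1 residue (poly_part n) x|
    <= (3 * N1)%:R * (h / pi / Num.sqrt h * 3^-1 ^+ n).
Proof.
move=> x0 x1; rewrite r_t_sub_r_approx //.
apply: le_trans (ler_norm_sum _ _ _) _.
apply: le_trans (ler_sum_nat (G := fun=> h / pi / Num.sqrt h * 3^-1 ^+ n) _) _.
  by move=> j /andP[lt_N1j _]; exact: weight_mul_err_le.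
by rewrite sumr_const_nat mulr_natl subSS /Nt -{2}(mul1n N1) -mulnBl.
Qed.

Lemma taylor_order_le : (0 < N1)%N ->
  taylor_order%:R <= (4 * Num.sqrt h + 2) * Num.sqrt N1%:R.
Proof.
move=> N1pos.
have trunc_le : (Num.truncn (2 * S))%:R <= 2 * S by rewrite truncn_le mulr_ge0 ?sqrtr_ge0.
have SE : S = Num.sqrt N1%:R * Num.sqrt h by rewrite /S sqrtrM ?ler0n.
have sN1_ge1 : 1 <= Num.sqrt (N1%:R : R) by rewrite -[X in X <= _]sqrtr1 ler_wsqrtr // ler1n.
have := sqrtr_ge0 h; rewrite /taylor_order natrM -natr1 SE in trunc_le *; nra.
Qed.

Lemma inv3_expn_taylor_order : 3^-1 ^+ taylor_order <= expR (- (2 * S)).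
Proof.
apply: le_trans (inv3_expn_le_expRN _ _) _.
by rewrite ler_expR lerN2 ltW // truncnS_gt.
Qed.

Lemma natr_mul_expR_le : N1%:R * expR (- (2 * S)) <= 4 / h * expR (- S).
Proof.
have S_ge0 : 0 <= S := sqrtr_ge0 _.
have N1E : N1%:R = S ^+ 2 / h.
  by rewrite sqr_sqrtr ?mulr_ge0 ?ler0n ?ltW // mulfK ?gt_eqF.
have -> : N1%:R * expR (- (2 * S)) = h^-1 * expR (- S) * (S ^+ 2 / expR S).
  by rewrite N1E -mulrN expRM_natl expRN; ring.
have -> : 4 / h * expR (- S) = h^-1 * expR (- S) * 4 by ring.
apply: ler_wpM2l; first by rewrite mulr_ge0 ?invr_ge0 ?expR_ge0 ?ltW.
by rewrite ler_pdivrMr ?expR_gt0 // sqr_le_4expR.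
Qed.

End RationalApproximation.

Theorem lemma2p2 (R : realType) (h : R) (hpos : 0 < h) :
  exists (C1 C2 : R) (N0 : nat), 0 < C1 /\ 0 < C2 /\
    forall N1 : nat, (0 < N1)%N -> (N0 <= N1)%N ->
      exists (a : nat -> R) (b : {poly R}),
        ((size b).-1)%:R <= C1 * Num.sqrt N1%:R /\
        forall x : R, 0 <= x -> x <= 1 ->
          `| r_t h N1 x - r_approx h N1 a b x |
            <= C2 * expR (- Num.sqrt ((Nt N1)%:R * h / 4%:R)).
Proof.
pose A := h / pi / Num.sqrt h.
have A_gt0 : 0 < A by rewrite !divr_gt0 ?pi_gt0 ?sqrtr_gt0.
exists (4 * Num.sqrt h + 2), (12 * A / h), 0%N.
split; first by have := sqrtr_ge0 h; lra.
split; first by rewrite divr_gt0 // mulr_gt0.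
move=> N1 N1_gt0 _; pose n := taylor_order h N1.
exists (residue h N1), (poly_part h N1 n); split.
  apply: le_trans _ (taylor_order_le h N1_gt0).
  by rewrite ler_nat -subn1 leq_subLR add1n size_poly_part.
move=> x x0 x1; rewrite sqrt_Nt_div4.
apply: le_trans (r_t_sub_r_approx_le N1 hpos n x0 x1) _.
set S := Num.sqrt (N1%:R * h).
have le_decay := inv3_expn_taylor_order h N1.
have le_N1 := natr_mul_expR_le N1 hpos.
rewrite -/A natrM.
have -> : 3 * N1%:R * (A * 3^-1 ^+ n) = 3 * A * (N1%:R * 3^-1 ^+ n) by ring.
have -> : 12 * A / h * expR (- S) = 3 * A * (4 / h * expR (- S)) by ring.
apply: ler_wpM2l; first by rewrite mulr_ge0 ?ltW.
apply: le_trans le_N1; apply: ler_wpM2l; [exact: ler0n | exact: le_decay].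
Qed.
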